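(* Let $n\ge3$ and let $\mathcal{L}$ be the operator on $\mathbb{R}^{\mathbb{Z}_n}$ given by $(\mathcal{L}v)(k)=\frac12\big(v(k+1)+v(k-1)\big)$ (indices mod $n$), and let $\mathbf{e}_0\in\mathbb{R}^{\mathbb{Z}_n}$ be the indicator vector of $0$. Then for every integer $\tau\ge1$, $$\max\left\{\frac1n,\frac{1}{2\sqrt{\tau}}\right\}\le \langle \mathbf{e}_0,\mathcal{L}^{2\tau}\mathbf{e}_0\rangle\le\frac4n+\frac{1}{\sqrt{\pi\tau}}.$$
   Context: $\mathcal{L}$ is the FTCS operator in dimension $d=1$ with $r=1/2$ (i.e. $\Delta t=\Delta x^2/(2\alpha)$); it is the transition matrix of the simple random walk on the cycle $\mathbb{Z}_n$, and $\langle \mathbf{e}_0,\mathcal{L}^{2\tau}\mathbf{e}_0\rangle=\|\mathcal{L}^\tau\mathbf{e}_0\|_2^2$. *)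

From mathcomp Require Import all_boot all_order all_algebra.
From mathcomp Require Import all_classical all_reals all_analysis.
Set Implicit Arguments. Unset Strict Implicit. Unset Printing Implicit Defensive.
Import Order.TTheory GRing.Theory Num.Theory.
Local Open Scope ring_scope.

(* Vectors in R^{Z_n}, indices are 'I_n = {0,...,n-1} with cyclic successor
   ordS (k+1 mod n) and predecessor ord_pred (k-1 mod n). *)

Definition Lop (R : realType) (n : nat) (v : 'I_n -> R) : 'I_n -> R :=
  fun k => (v (ordS k) + v (ord_pred k)) / 2.

Definition e0 (R : realType) (n : nat) : 'I_n -> R :=
  fun k => (nat_of_ord k == 0%N)%:R.

Definition dotv (R : realType) (n : nat) (u v : 'I_n -> R) : R :=
  \sum_(k < n) u k * v k.

From mathcomp Require Import all_boot all_order all_algebra.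
From mathcomp Require Import all_classical all_reals all_analysis.
From mathcomp Require Import ring lra zify.
Import Order.TTheory GRing.Theory Num.Theory.
Local Open Scope ring_scope.

(* L is the transition matrix of the simple random walk on Z_n, so that
   p = <e0, L^(2 tau) e0> is the probability of being back at 0 after 2 tau steps.
   - Lower bound 1/n: L is symmetric and preserves mass, hence p = |L^tau e0|^2,
     and a vector of mass 1 has squared norm at least 1/n (Cauchy-Schwarz).
   - Counting walks by their number of right steps gives
     p = C(2 tau, tau)/4^tau + 2 A/4^tau, where A weighs the walks on Z ending at
     a displacement 2d, d > 0, that is a multiple of n.
   - The central term c = C(2 tau, tau)/4^tau satisfies
     1/(2 sqrt tau) <= c <= 1/sqrt(pi tau): the upper bound is Wallis'
     inequality, derived from the Wallis integrals int_0^(pi/2) sin^k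
     (computed through explicit primitives), the lower bound is an
     elementary induction.
   - The marked displacements d are n/2 apart and C(2 tau, tau + d) decreases
     in d, so (n/2) A is at most the weight 4^tau/2 of all walks ending to the
     right; hence 2A/4^tau <= 4/n. *)

Lemma le_inv_sqrt (R : rcfType) (x y : R) :
  0 <= x -> 0 < y -> y * x ^+ 2 <= 1 -> x <= 1 / Num.sqrt y.
Proof.
move=> x_ge0 y_gt0 yx2_le1.
have sy_gt0 : 0 < Num.sqrt y by rewrite sqrtr_gt0.
have : (x * Num.sqrt y) ^+ 2 <= 1 by rewrite exprMn sqr_sqrtr 1?mulrC // ltW.
rewrite ler_pdivlMr // => sq_le1.
have : 0 <= x * Num.sqrt y by rewrite mulr_ge0 // ltW.
nra.
Qed.

Lemma inv_sqrt_le (R : rcfType) (c x y : R) :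
  0 < c -> 0 <= x -> 0 < y -> 1 <= c ^+ 2 * y * x ^+ 2 ->
  1 / (c * Num.sqrt y) <= x.
Proof.
move=> c_gt0 x_ge0 y_gt0 ge1.
have csy_gt0 : 0 < c * Num.sqrt y by rewrite mulr_gt0 // sqrtr_gt0.
have : 1 <= (x * (c * Num.sqrt y)) ^+ 2.
  by rewrite !exprMn sqr_sqrtr ?(ltW y_gt0) // mulrC.
rewrite ler_pdivrMr // => sq_ge1.
have : 0 <= x * (c * Num.sqrt y) by rewrite mulr_ge0 // ltW.
nra.
Qed.
Section WallisIntegrals.
Variable R : realType.

(* An explicit primitive of sin^k, built from the reduction formula
   k ∫ sin^k = - sin^(k-1) cos + (k-1) ∫ sin^(k-2). *)
Fixpoint sin_pow_prim (k : nat) : R -> R :=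
  match k with
  | 0 => id
  | 1 => fun x => - cos x
  | j.+2 => fun x =>
      (- (sin x ^+ j.+1 * cos x) + j.+1%:R * sin_pow_prim j x) / j.+2%:R
  end.

Lemma is_derive_sin_pow_prim k (x : R) :
  is_derive x 1 (sin_pow_prim k) (sin x ^+ k).
Proof.
elim/ltn_ind: k x => -[|[|j]] IH x.
- by rewrite expr0; exact: is_derive_id.
- have -> : sin_pow_prim 1 = - cos by apply/funext.
  by rewrite expr1; apply: is_derive_eq; rewrite opprK.
- have -> : sin_pow_prim j.+2 = j.+2%:R^-1 *:
      (- (sin ^+ j.+1 * cos) + j.+1%:R *: sin_pow_prim j).
    by apply/funext => y /=; rewrite !fctE mulrC.
  have dprim_j := IH j (leqW (leqnn _)) x.
  apply: is_derive_eq; rewrite !fctE /GRing.scale /=.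
  have cos2 : cos x ^+ 2 = 1 - sin x ^+ 2 by rewrite sin2cos2 opprB addrC subrK.
  have j2_neq0 : j.+2%:R != 0 :> R by rewrite pnatr_eq0.
  have -> : cos x * (j.+1%:R * sin x ^+ j * cos x) =
            j.+1%:R * sin x ^+ j * cos x ^+ 2 by ring.
  by rewrite cos2 !exprS; field.
Qed.

(* The Wallis integral W_k = ∫_0^{π/2} sin^k. *)
Definition wallis k := sin_pow_prim k (pi / 2) - sin_pow_prim k 0.

Lemma wallis0 : wallis 0 = pi / 2.
Proof. by rewrite /wallis /= subr0. Qed.

Lemma wallis1 : wallis 1 = 1.
Proof. by rewrite /wallis /= cos_pihalf cos0 oppr0 opprK add0r. Qed.

Lemma wallisSS k : wallis k.+2 = k.+1%:R / k.+2%:R * wallis k.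
Proof.
rewrite /wallis /= sin_pihalf cos_pihalf sin0 expr1n expr0n /=.
rewrite !mulr0 mul0r !oppr0 !add0r mulrBr.
by congr (_ - _); rewrite mulrAC mulrC mulrA.
Qed.

Lemma wallis_prod k : wallis k * wallis k.+1 = pi / (2 * k.+1%:R).
Proof.
elim: k => [|k IH]; first by rewrite wallis0 wallis1 !mulr1.
rewrite wallisSS mulrCA [wallis k.+1 * _]mulrC IH.
have k_ge0 := ler0n R k.
by field; apply/andP; split; rewrite gt_eqF //; lra.
Qed.

(* W_k is nonincreasing, since 0 <= sin <= 1 on [0, π/2];
   this is the mean value theorem applied to the primitives. *)
Lemma wallis_decr k : wallis k.+1 <= wallis k.
Proof.
have pi2_gt0 : 0 < pi / 2 :> R by rewrite divr_gt0 // pi_gt0.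
pose G : R -> R := sin_pow_prim k - sin_pow_prim k.+1.
have dG (x : R) : is_derive x 1 G (sin x ^+ k - sin x ^+ k.+1).
  exact: is_deriveB (is_derive_sin_pow_prim _ _) (is_derive_sin_pow_prim _ _).
have G_derivable (x : R) : derivable G x 1 by case: (dG x).
rewrite -subr_ge0.
have -> : wallis k - wallis k.+1 = G (pi / 2) - G 0.
  by rewrite /wallis /G !fctE; ring.
have [c c_in ->] := MVT pi2_gt0 (fun x _ => dG x)
  (derivable_within_continuous (fun x _ => G_derivable x)).
have sin_c_ge0 : 0 <= sin c.
  apply: sin_ge0_pi; move: c_in; rewrite in_itv /= => /andP[c_gt0 c_lt].
  rewrite ltW //= (le_trans (ltW c_lt)) // ler_pdivrMr // ler_peMr ?pi_ge0 //.
  by rewrite ler1n.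
rewrite subr0 mulr_ge0 ?(ltW pi2_gt0) // exprS -{1}(mul1r (sin c ^+ k)).
by rewrite -mulrBl mulr_ge0 ?exprn_ge0 // subr_ge0 sin_le1.
Qed.
End WallisIntegrals.

Section CentralBinomial.
Variable R : realType.

(* The normalised central binomial coefficient C(2m, m) / 4^m, i.e. the
   probability that a simple random walk on Z is back at 0 after 2m steps. *)
Definition central m : R := 'C(m.*2, m)%:R / 4 ^+ m.

Lemma central_ge0 m : 0 <= central m.
Proof. by rewrite divr_ge0 // exprn_ge0. Qed.

(* Consecutive terms have ratio (2m+1)/(2m+2), by the absorption identities
   (m+1) C(2m+1, m) = (2m+1) C(2m, m) and
   (m+1) C(2m+2, m+1) = (2m+2) C(2m+1, m). *)
Lemma central_rec m : central m.+1 = (m.*2.+1)%:R / (m.*2.+2)%:R * central m.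
Proof.
have := mul_bin_diag (m.+1).*2 m; have := mul_bin_down m.*2.+1 m.
rewrite doubleS /= (_ : (m.*2.+1 - m = m.+1)%N); last by rewrite -addnn; lia.
move=> /(congr1 (fun k => k%:R : R)) e1 /(congr1 (fun k => k%:R : R)) e2.
rewrite !natrM in e1 e2.
have m1_neq0 : m.+1%:R != 0 :> R by rewrite pnatr_eq0.
rewrite /central doubleS.
have -> : 'C(m.*2.+2, m.+1)%:R = m.*2.+2%:R * 'C(m.*2.+1, m)%:R / m.+1%:R :> R.
  by rewrite e2 mulrC mulKf.
have -> : 'C(m.*2.+1, m)%:R = m.*2.+1%:R * 'C(m.*2, m)%:R / m.+1%:R :> R.
  by rewrite e1 mulrC mulKf.
rewrite exprS -!mul2n.
have m_ge0 := ler0n R m.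
by field; rewrite expf_neq0 ?pnatr_eq0 //=; apply/andP; split;
   rewrite gt_eqF //; lra.
Qed.

Lemma wallis_even m : wallis R m.*2 = pi / 2 * central m.
Proof.
elim: m => [|m IH]; first by rewrite wallis0 /central bin0 expr0 divr1 mulr1.
by rewrite doubleS wallisSS IH central_rec; ring.
Qed.

(* Wallis' upper bound π m (C(2m, m) / 4^m)^2 <= 1, from
   W_(2m)^2 <= W_(2m-1) W_(2m) = π / (4m). *)
Lemma central_sqr_le m : pi * m%:R * central m ^+ 2 <= 1.
Proof.
case: m => [|m]; first by rewrite mulr0 mul0r ler01.
have W_ge0 : 0 <= wallis R m.*2.+2.
  by rewrite -doubleS wallis_even mulr_ge0 ?central_ge0 // divr_ge0 ?pi_ge0.
have W_sqr : wallis R m.*2.+2 ^+ 2 <= pi / (2 * (m.*2.+2)%:R).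
  by rewrite -wallis_prod expr2 ler_wpM2r // wallis_decr.
rewrite -doubleS wallis_even in W_sqr.
have m_ge0 := ler0n R m.
rewrite -(ler_pM2l (pi_gt0 R)) mulr1.
have -> : pi * (pi * m.+1%:R * central m.+1 ^+ 2) =
          4 * m.+1%:R * (pi / 2 * central m.+1) ^+ 2 by field.
apply: le_trans (ler_wpM2l _ W_sqr) _; first by rewrite mulr_ge0 // ler0n.
rewrite [leLHS](_ : _ = pi) // -mul2n; field.
by rewrite gt_eqF //; lra.
Qed.

(* The elementary lower bound 4 m (C(2m, m) / 4^m)^2 >= 1, by induction:
   the ratio (2m+1)^2 / (4 m (m+1)) of consecutive terms exceeds 1. *)
Lemma central_sqr_ge m : (0 < m)%N -> 1 <= 4 * m%:R * central m ^+ 2.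
Proof.
case: m => // m _; elim: m => [|m IH].
  rewrite /central /= expr1 (_ : 'C(2, 1)%:R = 2 :> R) //.
  by rewrite [leRHS](_ : _ = 1) //; field.
rewrite central_rec; set c := central m.+1 in IH *; set k : R := m.+1%:R.
have k_ge0 : 0 <= k by rewrite /k ler0n.
have -> : m.+2%:R = k + 1 :> R by rewrite /k -natr1.
have -> : m.+1.*2.+1%:R = 2 * k + 1 :> R by rewrite /k -natr1 -mul2n natrM.
have -> : m.+1.*2.+2%:R = 2 * k + 2 :> R by rewrite -addn2 natrD -mul2n natrM.
have -> : 4 * (k + 1) * ((2 * k + 1) / (2 * k + 2) * c) ^+ 2 =
          (2 * k + 1) ^+ 2 * c ^+ 2 / (k + 1).
  by field; rewrite gt_eqF //; lra.
rewrite ler_pdivlMr ?mul1r; last by lra.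
have c2_ge0 : 0 <= c ^+ 2 by apply: sqr_ge0.
have : 0 <= (k + 1) * (4 * k * c ^+ 2 - 1) by apply: mulr_ge0; lra.
nra.
Qed.

End CentralBinomial.

Section CentralBounds.
Variables (R : realType) (m : nat).
Hypothesis m_gt0 : (0 < m)%N.

Lemma central_le_inv_sqrt : central R m <= 1 / Num.sqrt (pi * m%:R).
Proof.
apply: le_inv_sqrt; rewrite ?central_ge0 ?central_sqr_le //.
by rewrite mulr_gt0 ?pi_gt0 ?ltr0n.
Qed.

Lemma inv_sqrt_le_central : 1 / (2 * Num.sqrt m%:R) <= central R m.
Proof.
apply: inv_sqrt_le; rewrite ?central_ge0 ?ltr0n //.
by rewrite (_ : 2 ^+ 2 = 4 :> R) ?central_sqr_ge //; rewrite expr2; ring.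
Qed.

End CentralBounds.

Section Combinatorics.
Local Open Scope nat_scope.

Lemma pascal_sum t (g : nat -> nat) :
  \sum_(i < t.+2) 'C(t.+1, i) * g i =
  \sum_(i < t.+1) 'C(t, i) * g i + \sum_(i < t.+1) 'C(t, i) * g i.+1.
Proof.
rewrite big_ord_recl bin0 mul1n.
under eq_bigr => i _ do rewrite lift0 binS mulnDl.
rewrite big_split /= [X in _ = X + _]big_ord_recl bin0 mul1n.
by rewrite big_ord_recr /= bin_small // mul0n addn0 addnA.
Qed.

Lemma sum_sym_fold (f : nat -> nat) t :
  (forall d, 1 <= d <= t -> f (t - d) = f (t + d)) ->
  \sum_(i < (2 * t).+1) f i = f t + 2 * \sum_(1 <= d < t.+1) f (t + d).
Proof.
move=> f_sym; rewrite -(big_mkord xpredT f).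
rewrite (@big_cat_nat _ _ _ t 0 (2 * t).+1) //=; last by lia.
rewrite (@big_ltn _ _ _ t) /=; last by lia.
have -> : \sum_(0 <= i < t) f i = \sum_(1 <= d < t.+1) f (t + d).
  rewrite big_nat_rev big_add1 /=.
  by apply: eq_big_nat => i /andP[_ i_lt]; rewrite add0n f_sym //; lia.
have -> : \sum_(t.+1 <= i < (2 * t).+1) f i = \sum_(1 <= d < t.+1) f (t + d).
  rewrite -add1n big_addn (_ : (2 * t).+1 - t = t.+1); last by lia.
  by apply: eq_big_nat => i _; rewrite addnC.
lia.
Qed.

Lemma binom_decr t d : 'C(2 * t, t + d.+1) <= 'C(2 * t, t + d).
Proof.
rewrite addnS -(leq_pmul2l (ltn0Sn (t + d))) mul_bin_left.
by apply: leq_mul => //; lia.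
Qed.

(* Sparse sums: if the marked indices P are >= h and pairwise h apart, each
   marked d owns the window (d - h, d] of length h; for nonincreasing weights
   c, h c(d) is at most the c-mass of that window, and windows are disjoint. *)
Lemma sparse_sum_le (c : nat -> nat) (P : pred nat) h :
  (forall d, c d.+1 <= c d) ->
  (forall d, 0 < d -> P d -> h <= d) ->
  (forall d e, P d -> P e -> d < e -> h <= e - d) ->
  forall N, h * \sum_(1 <= d < N) c d * P d <= \sum_(1 <= d < N) c d.
Proof.
move=> c_decr P_ge P_sep N; case: h P_ge P_sep => [|h] P_ge P_sep //.
have c_noninc d e : d <= e -> c e <= c d.
  apply: (@homo_leq _ c (fun a b => b <= a)) => // y x z xy yz.
  exact: leq_trans yz xy.
elim/ltn_ind: N => N IH.
have [N_le|h_lt] := leqP N h.+1.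
  rewrite big_nat_cond big1 ?muln0 // => d /andP[/andP[d_gt0 d_lt] _].
  by case Pd: (P d); rewrite ?muln0 //; have := P_ge d d_gt0 Pd; lia.
case: N IH h_lt => [//|M] IH h_lt.
rewrite big_nat_recr /=; last by lia.
rewrite [X in _ <= X]big_nat_recr /=; last by lia.
case PM: (P M); last first.
  by rewrite muln0 addn0 (leq_trans (IH M (ltnSn _))) // leq_addr.
pose K := M - h.
have [K_gt0 K_le] : 0 < K /\ K <= M by split; rewrite /K; lia.
rewrite (big_cat_nat K_gt0 K_le) [in X in _ <= X](big_cat_nat K_gt0 K_le) /=.
have -> : \sum_(K <= d < M) c d * P d = 0.
  rewrite big_nat_cond big1 // => d /andP[/andP[K_le_d d_lt] _].
  by case Pd: (P d); rewrite ?muln0 //; have := P_sep d M Pd PM d_lt; lia.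
rewrite addn0 muln1 mulnDr -addnA leq_add //; first by apply: IH; rewrite /K; lia.
have window_size : M.+1 - K = h.+1 by rewrite /K; lia.
rewrite -big_nat_recr /=; last by rewrite /K; lia.
rewrite -window_size -sum_nat_const_nat.
rewrite big_nat_cond [X in _ <= X]big_nat_cond.
by apply: leq_sum => d /andP[/andP[_ d_le] _]; apply: c_noninc.
Qed.
End Combinatorics.

Section RandomWalk.
Variables (R : realType) (n' : nat).
Local Notation n := n'.+1.
Local Notation L := (@Lop R n).
Local Notation e0 := (@e0 R n).

(* Endpoint, modulo n, of a walk of t steps of which i go to the right:
   2i - t, written without subtraction using n' = -1 (mod n). *)
Definition walk_end t i : nat := (n' * t + i.*2)%N.

Lemma modn_eq_ordS x (k : 'I_n) :
  ((x %% n)%N == ordS k) = (((x + n') %% n)%N == k).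
Proof.
rewrite /= -[in RHS](modn_small (ltn_ord k)) -(eqn_modDr 1 (x + n')).
by rewrite -addnA addn1 modnDr addn1.
Qed.

Lemma modn_eq_ord_pred x (k : 'I_n) :
  ((x %% n)%N == ord_pred k) = (((x + 1) %% n)%N == k).
Proof.
rewrite /= -[in RHS](modn_small (ltn_ord k)) -(eqn_modDr n' (x + 1)).
by rewrite -addnA add1n modnDr addnS.
Qed.

Lemma iter_Lop_e0 t (k : 'I_n) : iter t L e0 k =
  (\sum_(i < t.+1) 'C(t, i) * ((walk_end t i %% n)%N == k))%:R / 2 ^+ t.
Proof.
elim: t k => [|t IH] k.
  by rewrite big_ord1 /= bin0 mul1n expr0 divr1 /e0 /walk_end muln0 mod0n eq_sym.
rewrite iterS /Lop !IH.
under eq_bigr do rewrite modn_eq_ordS.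
under [in X in _ + X]eq_bigr do rewrite modn_eq_ord_pred.
have -> : (\sum_(i < t.+2) 'C(t.+1, i) * ((walk_end t.+1 i %% n)%N == k) =
           \sum_(i < t.+1) 'C(t, i) * (((walk_end t i + n') %% n)%N == k) +
           \sum_(i < t.+1) 'C(t, i) * (((walk_end t i + 1) %% n)%N == k))%N.
  rewrite (pascal_sum t (fun i => ((walk_end t.+1 i %% n)%N == k) : nat)).
  congr (_ + _)%N; apply: eq_bigr => i _.
  - by congr ('C(t, i) * ((_ %% n)%N == k))%N; rewrite /walk_end mulnS; lia.
  - rewrite -[in RHS](modnDr _ n).
    by congr ('C(t, i) * ((_ %% n)%N == k))%N; rewrite /walk_end mulnS; lia.
have pow2_neq0 : (2 : R) ^+ t != 0 by rewrite expf_neq0 // pnatr_eq0.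
by rewrite natrD exprS; field.
Qed.

Lemma sum_Lop (v : 'I_n -> R) : \sum_k L v k = \sum_k v k.
Proof.
have shiftS : \sum_k v (ordS k) = \sum_k v k.
  by rewrite [RHS](reindex_inj (@ordS_inj n)).
have shiftP : \sum_k v (ord_pred k) = \sum_k v k.
  by rewrite [RHS](reindex_inj (@ord_pred_inj n)).
by rewrite /Lop -mulr_suml big_split /= shiftS shiftP; field.
Qed.

Lemma dotv_Lop (u v : 'I_n -> R) : dotv u (L v) = dotv (L u) v.
Proof.
have shiftS : \sum_k u k * v (ordS k) = \sum_k u (ord_pred k) * v k.
  rewrite [LHS](reindex_inj (@ord_pred_inj n)) /=.
  by apply: eq_bigr => k _; rewrite ord_predK.
have shiftP : \sum_k u k * v (ord_pred k) = \sum_k u (ordS k) * v k.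
  rewrite [LHS](reindex_inj (@ordS_inj n)) /=.
  by apply: eq_bigr => k _; rewrite ordSK.
rewrite /dotv /Lop.
under eq_bigr do rewrite mulrA mulrDr.
under [RHS]eq_bigr do rewrite mulrAC mulrDl.
by rewrite -!mulr_suml !big_split /= shiftS shiftP addrC.
Qed.

Lemma dotv_iter_Lop t (u v : 'I_n -> R) :
  dotv u (iter t L v) = dotv (iter t L u) v.
Proof. by elim: t u => [|t IH] u //; rewrite iterS dotv_Lop IH -iterSr. Qed.

Lemma sum_iter_Lop_e0 t : \sum_k iter t L e0 k = 1.
Proof.
elim: t => [|t IH]; last by rewrite iterS sum_Lop.
by rewrite /= big_ord_recl /e0 /= big1 ?addr0.
Qed.

Lemma dotv_e0 (v : 'I_n -> R) : dotv e0 v = v ord0.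
Proof.
rewrite /dotv big_ord_recl /e0 /= mul1r big1 ?addr0 // => i _.
by rewrite mul0r.
Qed.

(* Cauchy-Schwarz: a vector of total mass 1 has squared norm >= 1/n,
   since 0 <= sum_k (u k - 1/n)^2 = |u|^2 - 1/n. *)
Lemma dotv_self_ge (u : 'I_n -> R) : \sum_k u k = 1 -> 1 / n%:R <= dotv u u.
Proof.
move=> mass1; have n_neq0 : n%:R != 0 :> R by rewrite pnatr_eq0.
have : 0 <= \sum_k (u k - 1 / n%:R) ^+ 2.
  by apply: sumr_ge0 => k _; exact: sqr_ge0.
have -> : \sum_k (u k - 1 / n%:R) ^+ 2 =
  dotv u u - 2 / n%:R * \sum_k u k + \sum_(k < n) (1 / n%:R) ^+ 2.
  by rewrite /dotv mulr_sumr -sumrB -big_split /=; apply: eq_bigr => k _; ring.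
rewrite mass1 sumr_const card_ord -subr_ge0.
by congr (0 <= _); field.
Qed.

(* The return probability after an even number of steps is a squared norm,
   hence at least 1/n. *)
Lemma return_prob_ge_inv_n t : 1 / n%:R <= dotv e0 (iter (2 * t) L e0).
Proof.
rewrite mul2n -addnn iterD dotv_iter_Lop.
by apply: dotv_self_ge; exact: sum_iter_Lop_e0.
Qed.
End RandomWalk.

Section ReturnProbability.
Variables (n' tau : nat).
Local Notation n := n'.+1.

Section Counting.
Local Open Scope nat_scope.

(* Binomial weight of the walks of 2 tau steps ending at a nonzero multiple of
   n to the right of the origin (the symmetric ones ending to the left have
   the same weight), and the total weight of all walks ending to the right. *)
Definition return_weight :=
  \sum_(1 <= d < tau.+1) 'C(2 * tau, tau + d) * (n %| d.*2).
Definition right_weight := \sum_(1 <= d < tau.+1) 'C(2 * tau, tau + d).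

Lemma walk_end_plus d : (n %| walk_end n' (2 * tau) (tau + d)) = (n %| d.*2).
Proof.
rewrite (_ : walk_end _ _ _ = n * (2 * tau) + d.*2); last first.
  by rewrite /walk_end; nia.
by rewrite dvdn_addr // dvdn_mulr.
Qed.

Lemma walk_end_minus d : d <= tau ->
  (n %| walk_end n' (2 * tau) (tau - d)) = (n %| d.*2).
Proof.
move=> d_le; have : n %| walk_end n' (2 * tau) (tau - d) + d.*2.
  by rewrite (_ : _ + _ = n * (2 * tau)) ?dvdn_mulr // /walk_end; nia.
by move=> sum_dvd; apply/idP/idP => [/dvdn_addr <-|/dvdn_addl <-].
Qed.

Lemma return_count :
  \sum_(i < (2 * tau).+1) 'C(2 * tau, i) * (walk_end n' (2 * tau) i %% n == 0) =
  'C(2 * tau, tau) + 2 * return_weight.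
Proof.
rewrite (sum_sym_fold (fun i => 'C(2 * tau, i) * (n %| walk_end n' (2 * tau) i))).
  rewrite -[tau in walk_end _ _ tau]addn0 walk_end_plus muln1.
  by congr (_ + 2 * _); apply: eq_big_nat => d _; rewrite walk_end_plus.
move=> d /andP[d_gt0 d_le]; rewrite walk_end_plus walk_end_minus //.
by rewrite -bin_sub; [congr ('C(_, _) * _); lia | lia].
Qed.

Lemma binom_total : 2 ^ (2 * tau) = 'C(2 * tau, tau) + 2 * right_weight.
Proof.
rewrite -{1}[2]/(1 + 1) expnDn.
under eq_bigr do rewrite !exp1n !muln1.
rewrite (sum_sym_fold (fun i => 'C(2 * tau, i))) // => d /andP[d_gt0 d_le].
by rewrite -bin_sub; [congr 'C(_, _); lia | lia].
Qed.

(* Returning walks are sparse among the right-ending ones: the marked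
   displacements d (those with n | 2d) are at least n/2 apart. *)
Lemma return_weight_le : (n %/ 2) * return_weight <= right_weight.
Proof.
apply: (@sparse_sum_le (fun d => 'C(2 * tau, tau + d))).
- exact: binom_decr.
- move=> d d_gt0 /dvdn_leq; rewrite -addnn; lia.
- move=> d e Pd Pe d_lt; have := dvdn_sub Pe Pd.
  by rewrite -doubleB => /dvdn_leq; rewrite -addnn; lia.
Qed.

(* Wrapping returns are rare: n * 2 return_weight <= 4 * 4^tau, since
   n <= 4 (n/2) for n >= 2 and 2 right_weight <= 4^tau. *)
Lemma return_weight_bound :
  0 < n' -> n * (2 * return_weight) <= 4 * 2 ^ (2 * tau).
Proof.
move=> n'_gt0; have := return_weight_le; rewrite binom_total.
have : n <= 4 * (n %/ 2) by lia.
nia.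
Qed.

End Counting.

Variable R : realType.

Lemma return_prob_split :
  dotv (@e0 R n) (iter (2 * tau) (@Lop R n) (@e0 R n)) =
  central R tau + (2 * return_weight)%:R / 2 ^+ (2 * tau).
Proof.
rewrite dotv_e0 iter_Lop_e0 return_count natrD mulrDl; congr (_ + _).
by rewrite /central -mul2n exprM (_ : 2 ^+ 2 = 4 :> R) // expr2; ring.
Qed.

Lemma wrap_prob_le : (0 < n')%N ->
  (2 * return_weight)%:R / 2 ^+ (2 * tau) <= 4 / n%:R :> R.
Proof.
move=> n'_gt0; rewrite ler_pdivrMr ?exprn_gt0 // mulrAC ler_pdivlMr ?ltr0n //.
by rewrite -natrX -!natrM ler_nat mulnC return_weight_bound.
Qed.

End ReturnProbability.

Theorem mainTheorem5 (R : realType) (n tau : nat) (hn : (3 <= n)%N) (htau : (1 <= tau)%N) :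
  Num.max (1 / n%:R) (1 / (2 * Num.sqrt (tau%:R))) <=
    dotv (@e0 R n) (iter (2 * tau)%N (@Lop R n) (@e0 R n)) /\
  dotv (@e0 R n) (iter (2 * tau)%N (@Lop R n) (@e0 R n)) <=
    4 / n%:R + 1 / Num.sqrt (pi * tau%:R).
Proof.
case: n hn => [//|n'] hn; have n'_gt0 : (0 < n')%N by lia.
have wrap_ge0 : 0 <= (2 * return_weight n' tau)%:R / 2 ^+ (2 * tau) :> R.
  by rewrite divr_ge0 ?exprn_ge0.
split.
- rewrite ge_max return_prob_ge_inv_n /=.
  apply: le_trans (@inv_sqrt_le_central R tau htau) _.
  by rewrite return_prob_split lerDl.
- rewrite return_prob_split addrC lerD ?wrap_prob_le //.
  exact: central_le_inv_sqrt.
Qed.
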